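(* Let $p\ne3$ be a prime, $a\in\mathbb{Z}_p^*$ and $b,c\in\mathbb{Z}_p$. Then $Q_{a,b}(\mathbb{Z}_p)\cong Q_{a,c}(\mathbb{Z}_p)$.
   Context: Identify $\mathbb{Z}_p$ with $\{0,\dots,p-1\}$. The overflow indicator is $(x,y)_p=1$ if $x+y\ge p$ as integers and $0$ otherwise. $Q_{a,b}(\mathbb{Z}_p)$ is $\mathbb{Z}_p^3$ with multiplication $(x_1,x_2,x_3)(y_1,y_2,y_3)=(x_1+y_1+(x_2+y_2)x_3y_3+a(x_2,y_2)_p+b(x_3,y_3)_p,\ x_2+y_2,\ x_3+y_3)$. *)

(* Z_p is modelled by 'Z_p (for prime p, 'Z_p is 'I_p with
   arithmetic mod p); elements are identified with their representatives
   0..p-1 via val. *)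
From HB Require Import structures.
From mathcomp Require Import all_boot all_order all_algebra.
Set Implicit Arguments. Unset Strict Implicit. Unset Printing Implicit Defensive.
Import GRing.Theory.
Local Open Scope ring_scope.

Definition overflow (p : nat) (x y : 'Z_p) : nat :=
  if (p <= val x + val y)%N then 1%N else 0%N.

Definition Qcar (p : nat) := ('Z_p * 'Z_p * 'Z_p)%type.

Definition Qmul (p : nat) (a b : 'Z_p) (x y : Qcar p) : Qcar p :=
  let: (x1, x2, x3) := x in
  let: (y1, y2, y3) := y in
  (x1 + y1 + (x2 + y2) * x3 * y3 + a *+ overflow x2 y2 + b *+ overflow x3 y3,
   x2 + y2, x3 + y3).

Definition Q_isomorphic (p : nat) (a b a' c : 'Z_p) : Prop :=
  exists f : Qcar p -> Qcar p,
    bijective f /\ forall x y, f (Qmul a b x y) = Qmul a' c (f x) (f y).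

From HB Require Import structures.
From mathcomp Require Import all_boot all_algebra.
From mathcomp Require Import ring zify.
Set Implicit Arguments. Unset Strict Implicit. Unset Printing Implicit Defensive.
Import GRing.Theory.
Local Open Scope ring_scope.

(* Put t = a^-1 (b - c) and s = t / 3, and let T = val t be the
   representative of t.  The isomorphism is the shear
       f (x1, x2, x3) = (x1 + s x3^3 + a * k(x2, x3), x2 + t x3, x3),
   where k(u, v) = (val u + T val v) div p is the carry lost when the
   integer u + T v is reduced mod p.

   We first prove, for any modulus p > 1,
   the carry identity: reducing the linear form u + T v commutes with the
   overflow indicators up to carries,
       k(x + y) + (x2,y2)_p + T (x3,y3)_p = k(x) + k(y) + (x2+Tx3, y2+Ty3)_p.
   Then, for any t, s with b = c + a t and t = 3 s, the shear is a bijective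
   homomorphism Q_{a,b} -> Q_{a,c}: the cubic term absorbs the change of the
   middle factor of the product, the carry term absorbs the overflows.
   Finally, for p prime, a and 3 are units, so such t and s exist. *)

Section CarryIdentity.

Variable p : nat.
Hypothesis p_gt1 : (1 < p)%N.

Let p_gt0 : (0 < p)%N. Proof. exact: ltnW. Qed.

Lemma modZp (m : nat) : (m %% (Zp_trunc p).+2 = m %% p)%N.
Proof. by rewrite Zp_cast. Qed.

Lemma val_Zp_lt (x : 'Z_p) : (val x < p)%N.
Proof. by rewrite -[X in (_ < X)%N](Zp_cast p_gt1) ltn_ord. Qed.

Lemma val_addZp (x y : 'Z_p) :
  (val (x + y)%R + p * overflow x y = val x + val y)%N.
Proof.
have := val_Zp_lt x; have := val_Zp_lt y.
rewrite /overflow /= modZp.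
case: (leqP p (val x + val y)) => [le_p lt_y lt_x | lt_p _ _].
- rewrite muln1 -{1}(subnK le_p) modnDr modn_small ?subnK // ltn_subLR //.
  exact: leq_add lt_x (ltnW lt_y).
- by rewrite muln0 addn0 modn_small.
Qed.

Lemma val_lin_Zp (t u v : 'Z_p) :
  val (u + t * v)%R = ((val u + val t * val v) %% p)%N.
Proof. by rewrite /= !modZp modnDmr. Qed.

Definition carry (t u v : 'Z_p) : nat := ((val u + val t * val v) %/ p)%N.

Lemma carry_spec (t u v : 'Z_p) :
  (val u + val t * val v = p * carry t u v + val (u + t * v)%R)%N.
Proof. by rewrite val_lin_Zp [(p * _)%N]mulnC -divn_eq. Qed.

(* Multiplied by p, both sides equal the same natural number, by carry_spec
   and val_addZp applied to all sums involved. *)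
Lemma carry_identity (t x2 x3 y2 y3 : 'Z_p) :
  (carry t (x2 + y2)%R (x3 + y3)%R + overflow x2 y2 + val t * overflow x3 y3
   = carry t x2 x3 + carry t y2 y3 + overflow (x2 + t * x3)%R (y2 + t * y3)%R)%N.
Proof.
have sum_lin : x2 + t * x3 + (y2 + t * y3) = x2 + y2 + t * (x3 + y3).
  by rewrite mulrDr addrACA.
have ovL := val_addZp (x2 + t * x3) (y2 + t * y3).
rewrite sum_lin in ovL.
have ov2 := val_addZp x2 y2; have ov3 := val_addZp x3 y3.
have k1 := carry_spec t x2 x3; have k2 := carry_spec t y2 y3.
have k12 := carry_spec t (x2 + y2) (x3 + y3).
apply/eqP; rewrite -(eqn_pmul2l p_gt0); apply/eqP.
nia.
Qed.

End CarryIdentity.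

Lemma mulrn_valZp (p : nat) (y t : 'Z_p) : y *+ val t = y * t.
Proof. by rewrite -mulr_natr natr_Zp. Qed.

Definition shear (p : nat) (a t s : 'Z_p) (x : Qcar p) : Qcar p :=
  let: (x1, x2, x3) := x in
  (x1 + s * x3 ^+ 3 + a *+ carry t x2 x3, x2 + t * x3, x3).

Definition unshear (p : nat) (a t s : 'Z_p) (y : Qcar p) : Qcar p :=
  let: (y1, y2, y3) := y in
  (y1 - (s * y3 ^+ 3 + a *+ carry t (y2 - t * y3) y3), y2 - t * y3, y3).

(* The shear is invertible: its middle coordinate is a shear of 'Z_p^2 and
   its first coordinate is a translation depending only on the others. *)
Lemma shear_bij (p : nat) (a t s : 'Z_p) : bijective (shear a t s).
Proof.
exists (unshear a t s).
- by case=> [[x1 x2] x3]; rewrite /= (addrK (t * x3)) -[x1 + _ + _]addrA addrK.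
- by case=> [[y1 y2] y3]; rewrite /= (subrK (t * y3)) -[y1 - _ + _ + _]addrA subrK.
Qed.

(* The ring identity behind the first coordinate of the homomorphism
   property, with the carries and overflows as opaque ring elements and
   naturals: once t = 3 s, the cubic correction s ((x3+y3)^3 - x3^3 - y3^3)
   is t x3 y3 (x3 + y3), the change of the middle factor of the product. *)
Lemma shear_first_coord (R : comRingType) (a c s t x1 x2 x3 y1 y2 y3 : R)
    (kx ky kxy : R) (ov2 ov3 ovL : nat) :
  t = 3%:R * s -> kxy + a *+ ov2 + (a * t) *+ ov3 = kx + ky + a *+ ovL ->
  x1 + y1 + (x2 + y2) * x3 * y3 + a *+ ov2 + (c + a * t) *+ ov3
    + s * (x3 + y3) ^+ 3 + kxy
  = x1 + s * x3 ^+ 3 + kx + (y1 + s * y3 ^+ 3 + ky)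
    + (x2 + t * x3 + (y2 + t * y3)) * x3 * y3 + a *+ ovL + c *+ ov3.
Proof.
move=> -> carries.
have -> : kxy = kx + ky + a *+ ovL - a *+ ov2 - (a * (3%:R * s)) *+ ov3.
  by rewrite -carries; ring.
ring.
Qed.

Lemma shear_morph (p : nat) (p_gt1 : (1 < p)%N) (a b c t s : 'Z_p) :
  b = c + a * t -> t = 3%:R * s ->
  forall x y, shear a t s (Qmul a b x y) = Qmul a c (shear a t s x) (shear a t s y).
Proof.
move=> -> t_3s [[x1 x2] x3] [[y1 y2] y3] /=.
have sum_lin : x2 + y2 + t * (x3 + y3) = x2 + t * x3 + (y2 + t * y3).
  by rewrite mulrDr addrACA.
rewrite sum_lin; congr (_, _, _); apply: shear_first_coord t_3s _.
have := congr1 (fun n => a *+ n) (carry_identity p_gt1 t x2 x3 y2 y3).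
by rewrite /= !mulrnDr mulrnA mulrn_valZp.
Qed.

Lemma unit_Zp_prime (p : nat) (p_pr : prime p) (x : 'Z_p) :
  x != 0 -> x \is a GRing.unit.
Proof.
move=> x_neq0; have p_gt1 := prime_gt1 p_pr.
rewrite -(natr_Zp x) unitZpE // prime_coprime // gtnNdvd ?val_Zp_lt //.
by rewrite lt0n; apply: contra x_neq0 => /eqP x0; apply/eqP/val_inj.
Qed.

Theorem corollary5p10 (p : nat) (hp : prime p) (hp3 : p != 3%N)
  (a b c : 'Z_p) (ha : a != 0) :
  Q_isomorphic a b a c.
Proof.
have p_gt1 := prime_gt1 hp.
have ua := unit_Zp_prime hp ha.
have u3 : (3%:R : 'Z_p) \is a GRing.unit.
  by rewrite unitZpE // prime_coprime // dvdn_prime2.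
pose t := a^-1 * (b - c); pose s := (3%:R)^-1 * t.
exists (shear a t s); split; first exact: shear_bij.
apply: shear_morph => //.
- by rewrite /t mulrA mulrV // mul1r addrC subrK.
- by rewrite /s mulrA mulrV // mul1r.
Qed.
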